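(* Let $k$ be a field, $R=k[x_1,\dots,x_d]$ a standard graded polynomial ring, and $I=(\alpha_1,\dots,\alpha_m)\subset R$ a perfect ideal of height $2$ with $m>d$ such that, with respect to $\alpha_1,\dots,\alpha_m$, $I$ has a Hilbert–Burch matrix $\varphi=[v_1|\cdots|v_{m-1}]$ with $v_i\in(R_1)^m$ for $1\le i\le m-2$ and $v_{m-1}\in(R_n)^m$ for some $n\ge1$. Assume $I$ satisfies $G_d$. Then in the ring $A$ (inside its fraction field) \[\frac{\overline g\,\overline K^{\,n}}{\overline{x_d}^{\,n}}\subseteq\overline{\mathcal L+I_d(B_n(\varphi))}.\]
   Context: $G_d$: $\mu(I_P)\le\operatorname{ht}P$ for all primes $P\supseteq I$ with $\operatorname{ht}P<d$. $S=R[T_1,\dots,T_m]$, bigraded by $\deg x_i=(1,0)$, $\deg T_j=(0,1)$. Write $[T_1\cdots T_m]\cdot\varphi=[L_1\cdots L_{m-2}\ g]$, $\mathcal L=(L_1,\dots,L_{m-2},g)$. Let $B(\varphi')$ be the $d\times(m-2)$ matrix of linear forms in $k[T_1,\dots,T_m]$ with $[x_1\cdots x_d]\cdot B(\varphi')=[L_1\cdots L_{m-2}]$; $J=(L_1,\dots,L_{m-2})+I_d(B(\varphi'))$, $A=S/J$ (a domain), bars denote images in $A$; $B$ is $B(\varphi')$ with last row deleted; $K=(L_1,\dots,L_{m-2})+I_{d-1}(B)+(x_d)$. Iterated Jacobian duals with respect to $x_1,\dots,x_d$: $B_1(\varphi)$ is a $d\times(m-1)$ matrix with bihomogeneous entries,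 of constant bidegree along each column, with $[x_1\cdots x_d]\cdot B_1(\varphi)=[T_1\cdots T_m]\cdot\varphi$, and $\mathcal L_1=\mathcal L$. Given $B_{i-1}(\varphi)$ and $\mathcal L_{i-1}$ = ideal generated by the entries of $[x_1\cdots x_d]\cdot B_{i-1}(\varphi)$, choose bihomogeneous $u_1,\dots,u_l$ with $\mathcal L_{i-1}+(I_d(B_{i-1}(\varphi))\cap(x_1,\dots,x_d))=\mathcal L_{i-1}+(u_1,\dots,u_l)$, a matrix $C$ with bihomogeneous entries of constant bidegree along each column with $[u_1\cdots u_l]=[x_1\cdots x_d]\cdot C$, and set $B_i(\varphi)=[B_{i-1}(\varphi)|C]$. (The ideal $\mathcal L+I_d(B_i(\varphi))$ is independent of these choices.) *)

From HB Require Import structures.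
From mathcomp Require Import all_boot all_order all_algebra.
From mathcomp Require Import mpoly.
Set Implicit Arguments.
Unset Strict Implicit.
Unset Printing Implicit Defensive.
Import GRing.Theory.
Local Open Scope ring_scope.

Section Ideals.
Variable A : comNzRingType.

Definition ideal_span (P : A -> Prop) : A -> Prop :=
  fun f => exists (n : nat) (c g : 'I_n -> A),
    (forall i, P (g i)) /\ f = \sum_(i < n) c i * g i.

Definition fam_ideal (n : nat) (a : 'I_n -> A) : A -> Prop :=
  ideal_span (fun f => exists i, f = a i).

Definition ideal_add (P Q : A -> Prop) : A -> Prop :=
  ideal_span (fun f => P f \/ Q f).

Definition ideal_pow (P : A -> Prop) (n : nat) : A -> Prop :=
  ideal_span (fun f => exists ks : 'I_n -> A,
    (forall i, P (ks i)) /\ f = \prod_(i < n) ks i).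

Definition ideal_sub (P Q : A -> Prop) : Prop := forall f, P f -> Q f.

Definition is_ideal (P : A -> Prop) : Prop :=
  [/\ P 0, (forall a b, P a -> P b -> P (a + b)) & (forall r a, P a -> P (r * a))].

Definition is_prime (P : A -> Prop) : Prop :=
  [/\ is_ideal P, ~ P 1 & (forall a b, P (a * b) -> P a \/ P b)].

Definition prime_chain (h : nat) (C : 'I_h.+1 -> A -> Prop) : Prop :=
  (forall i, is_prime (C i)) /\
  (forall i : 'I_h, ideal_sub (C (widen_ord (leqnSn h) i)) (C (lift ord0 i)) /\
                    ~ ideal_sub (C (lift ord0 i)) (C (widen_ord (leqnSn h) i))).

Definition prime_height (P : A -> Prop) (h : nat) : Prop :=
  (exists C : 'I_h.+1 -> A -> Prop,
      prime_chain C /\ forall f, C ord_max f <-> P f) /\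
  ~ (exists C : 'I_h.+2 -> A -> Prop,
      prime_chain C /\ forall f, C ord_max f <-> P f).

Definition ideal_height (I : A -> Prop) (h : nat) : Prop :=
  (exists P, [/\ is_prime P, ideal_sub I P & prime_height P h]) /\
  (forall P h', is_prime P -> ideal_sub I P -> prime_height P h' -> (h <= h')%N).

(* mu(I_P) <= h, for I = (a_0,...,a_{m-1}) and P prime: I_P is generated by
   h elements, i.e. there are b_1..b_h in I and s outside P with s I <= (b). *)
Definition mu_loc_le (m : nat) (a : 'I_m -> A) (P : A -> Prop) (h : nat) : Prop :=
  exists (b : 'I_h -> A) (s : A),
    [/\ forall j, fam_ideal a (b j), ~ P s &
        forall i, fam_ideal b (s * a i)].

Definition G_cond (d m : nat) (a : 'I_m -> A) : Prop :=
  forall P h, is_prime P -> ideal_sub (fam_ideal a) P -> prime_height P h ->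
    (h < d)%N -> mu_loc_le a P h.

Definition minors_ideal (t r c : nat) (M : 'M[A]_(r, c)) : A -> Prop :=
  ideal_span (fun f => exists (ri : 'I_t -> 'I_r) (ci : 'I_t -> 'I_c),
    [/\ injective ri, injective ci &
        f = \det (\matrix_(i, j) M (ri i) (ci j))]).

(* 0 -> A^c --phi--> A^m --[a]--> I -> 0 is exact, and ht I = 2:
   I is perfect of height 2 with Hilbert-Burch matrix phi w.r.t. a *)
Definition HB_perfect_ht2 (m c : nat) (a : 'rV[A]_m) (phi : 'M[A]_(m, c)) : Prop :=
  [/\ a *m phi = 0,
      (forall w : 'cV[A]_m, a *m w = 0 -> exists y : 'cV[A]_c, w = phi *m y),
      (forall y : 'cV[A]_c, phi *m y = 0 -> y = 0) &
      ideal_height (fam_ideal (fun i => a 0 i)) 2].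

End Ideals.

Lemma pred_ltn (d : nat) : (0 < d)%N -> (d.-1 < d)%N.
Proof. by case: d. Qed.

Definition last_ord (d : nat) (hd : (0 < d)%N) : 'I_d := Ordinal (pred_ltn hd).

(* R = k[x_1..x_d] = {mpoly k[d]},  S = R[T_1..T_m] = {mpoly k[d + m]} *)
Section Rings.
Variables (k : fieldType) (d m : nat).

Local Notation R := {mpoly k[d]}.
Local Notation S := {mpoly k[d + m]}.

Definition std_homog (e : nat) (p : R) : Prop :=
  forall mo, mo \in msupp p -> mdeg mo = e.

Definition xvar (i : 'I_d) : S := 'X_(lshift m i).
Definition Tvar (j : 'I_m) : S := 'X_(rshift d j).

Definition incl_RS (p : R) : S := p \mPo [tuple xvar i | i < d].

Definition xdeg (mo : 'X_{1..d + m}) : nat := (\sum_(i < d) mo (lshift m i))%N.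
Definition Tdeg (mo : 'X_{1..d + m}) : nat := (\sum_(j < m) mo (rshift d j))%N.

Definition bihomog (a b : nat) (p : S) : Prop :=
  forall mo, mo \in msupp p -> xdeg mo = a /\ Tdeg mo = b.

Definition is_bihomog (p : S) : Prop := exists a b, bihomog a b p.

Definition col_bihomog (r c : nat) (M : 'M[S]_(r, c)) : Prop :=
  forall j, exists a b, forall i, bihomog a b (M i j).

Definition xvec : 'rV[S]_d := \row_i xvar i.
Definition Tvec : 'rV[S]_m := \row_j Tvar j.

Definition xideal : S -> Prop := fam_ideal xvar.

Definition Lof (c : nat) (B : 'M[S]_(d, c)) : S -> Prop :=
  fam_ideal (fun j => (xvec *m B) 0 j).

(* IJD phi i B : B is a (valid choice of) i-th iterated Jacobian dual
   B_i(phi) of phi with respect to x_1, ..., x_d. *)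
Inductive IJD (c0 : nat) (phi : 'M[R]_(m, c0)) : nat -> forall c, 'M[S]_(d, c) -> Prop :=
| IJD_1 (B : 'M[S]_(d, c0)) :
    col_bihomog B -> xvec *m B = Tvec *m map_mx incl_RS phi -> IJD phi 1 B
| IJD_S (i c : nat) (B : 'M[S]_(d, c)) (l : nat) (u : 'I_l -> S) (C : 'M[S]_(d, l)) :
    IJD phi i B ->
    (forall j, is_bihomog (u j)) ->
    (forall f, ideal_add (Lof B) (fun f => minors_ideal d B f /\ xideal f) f <->
               ideal_add (Lof B) (fam_ideal u) f) ->
    col_bihomog C ->
    (forall j, (xvec *m C) 0 j = u j) ->
    IJD phi i.+1 (row_mx B C).

End Rings.

(* Grade S by the degree in x alone.  J is generated by x-homogeneous
   elements (the L_j have x-degree 1, the d-minors of B(phi') x-degree 0), so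
   it is stable under taking x-homogeneous components.  The basic step is
   Cramer's rule: if every nonzero column of B(phi') is a column of M, then for
   every (d-1)-minor D of B and every column t of M, ([x].M)_t * D = x_d * D'
   modulo J for some d-minor D' of M, because the other terms of the Cramer
   expansion are multiples of the L_j.
   Now multiply g by n generators of K one at a time, keeping
   g * (product) = x_d^i * w modulo J: a factor L_j puts the product in J, a
   factor x_d raises i, and a minor goes through the Cramer step, which needs w
   in the ideal of the entries of [x].B_i.  While
   i < n, the left-hand side has x-degree at least n > i, so comparing
   x-components shows that the x-degree-0 part of w can be dropped; then w lies
   in L + (I_d(B_i) /\ (x)), which the next Jacobian dual B_{i+1} puts among
   the entries of [x].B_{i+1}. *)
From HB Require Import structures.
From mathcomp Require Import all_boot all_order all_algebra.
From mathcomp Require Import mpoly ring.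
Set Implicit Arguments.
Unset Strict Implicit.
Unset Printing Implicit Defensive.
Import GRing.Theory.
Local Open Scope ring_scope.

Section OrdExtension.
Variables (T : Type) (n : nat) (i0 : 'I_n).

Definition ord_ext (f : 'I_n.-1 -> T) (x : T) (i : 'I_n) : T :=
  if unlift i0 i is Some i' then f i' else x.

Lemma ord_ext_pivot f x : ord_ext f x i0 = x.
Proof. by rewrite /ord_ext unlift_none. Qed.

Lemma ord_ext_lift f x i : ord_ext f x (lift i0 i) = f i.
Proof. by rewrite /ord_ext liftK. Qed.

End OrdExtension.

Lemma ord_ext_lift_inj n (i0 : 'I_n) (f : 'I_n.-1 -> 'I_n.-1) :
  injective f -> injective (ord_ext i0 (lift i0 \o f) i0).
Proof.
move=> f_inj i1 i2.
case: (unliftP i0 i1) => [j1 ->|->]; case: (unliftP i0 i2) => [j2 ->|->];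
  rewrite ?ord_ext_lift ?ord_ext_pivot //=.
- by move=> /lift_inj /f_inj ->.
- by move=> eq_i0; have := neq_lift i0 (f j1); rewrite eq_i0 eqxx.
- by move=> eq_i0; have := neq_lift i0 (f j2); rewrite -eq_i0 eqxx.
Qed.

Section Ideals.
Variable A : comNzRingType.
Implicit Types (P Q I J : A -> Prop) (a b f r : A).

Definition minor_gen (t r c : nat) (M : 'M[A]_(r, c)) f : Prop :=
  exists (ri : 'I_t -> 'I_r) (ci : 'I_t -> 'I_c),
    [/\ injective ri, injective ci & f = \det (\matrix_(i, j) M (ri i) (ci j))].

Section IdealClosure.
Variable I : A -> Prop.
Hypothesis idI : is_ideal I.

Lemma ideal0 : I 0. Proof. by case: idI. Qed.

Lemma idealD a b : I a -> I b -> I (a + b). Proof. by case: idI => _ + _; apply. Qed.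

Lemma idealMl r a : I a -> I (r * a). Proof. by case: idI => _ _; apply. Qed.

Lemma idealMr r a : I a -> I (a * r). Proof. by rewrite mulrC; apply: idealMl. Qed.

Lemma idealN a : I a -> I (- a). Proof. by rewrite -mulN1r; apply: idealMl. Qed.

Lemma idealB a b : I a -> I b -> I (a - b).
Proof. by move=> Ia Ib; apply: idealD => //; apply: idealN. Qed.

Lemma ideal_sum T (s : seq T) (p : pred T) (F : T -> A) :
  (forall i, p i -> I (F i)) -> I (\sum_(i <- s | p i) F i).
Proof. by move=> IF; apply: big_ind => //; [apply: ideal0 | apply: idealD]. Qed.

End IdealClosure.

Lemma ideal_span_gen P f : P f -> ideal_span P f.
Proof.
by move=> Pf; exists 1%N, (fun _ => 1), (fun _ => f); rewrite big_ord1 mul1r.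
Qed.

Lemma ideal_span_ideal P : is_ideal (ideal_span P).
Proof.
split.
- by exists 0%N, (fun _ => 0), (fun _ => 0); split; [case | rewrite big_ord0].
- move=> _ _ [n1 [c1 [g1 [P1 ->]]]] [n2 [c2 [g2 [P2 ->]]]].
  exists (n1 + n2)%N, (fun i => match split i with inl i1 => c1 i1 | inr i2 => c2 i2 end),
    (fun i => match split i with inl i1 => g1 i1 | inr i2 => g2 i2 end).
  split; first by move=> i; case: (split i).
  rewrite big_split_ord; congr (_ + _); apply: eq_bigr => i _.
    by rewrite (unsplitK (inl _ i)).
  by rewrite (unsplitK (inr _ i)).
- move=> r _ [n1 [c1 [g1 [P1 ->]]]]; exists n1, (fun i => r * c1 i), g1.
  by split=> //; rewrite mulr_sumr; apply: eq_bigr => i _; rewrite mulrA.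
Qed.

Lemma ideal_span_min P I : is_ideal I -> (forall f, P f -> I f) ->
  forall f, ideal_span P f -> I f.
Proof.
move=> idI PI _ [n [c [gs [Pgs ->]]]].
by apply: ideal_sum => // i _; apply: idealMl => //; apply: PI.
Qed.

Lemma ideal_add_ideal P Q : is_ideal (ideal_add P Q).
Proof. exact: ideal_span_ideal. Qed.

Lemma ideal_addl P Q f : P f -> ideal_add P Q f.
Proof. by move=> Pf; apply: ideal_span_gen; left. Qed.

Lemma ideal_addr P Q f : Q f -> ideal_add P Q f.
Proof. by move=> Qf; apply: ideal_span_gen; right. Qed.

Lemma ideal_add_min P Q I : is_ideal I -> (forall f, P f -> I f) ->
  (forall f, Q f -> I f) -> forall f, ideal_add P Q f -> I f.
Proof. by move=> idI PI QI; apply: ideal_span_min => // f [/PI | /QI]. Qed.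

Lemma ideal_add_decomp P Q f : is_ideal P -> is_ideal Q -> ideal_add P Q f ->
  exists a b, [/\ P a, Q b & f = a + b].
Proof.
move=> idP idQ.
apply: (ideal_add_min (I := fun f => exists a b, [/\ P a, Q b & f = a + b]))
  => [|a Pa|b Qb].
- split.
  + by exists 0, 0; rewrite addr0; split=> //; apply: ideal0.
  + move=> _ _ [a1 [b1 [Pa1 Qb1 ->]]] [a2 [b2 [Pa2 Qb2 ->]]].
    by exists (a1 + a2), (b1 + b2); rewrite addrACA; split=> //; apply: idealD.
  + move=> r _ [a [b [Pa Qb ->]]]; exists (r * a), (r * b).
    by rewrite mulrDr; split=> //; apply: idealMl.
- by exists a, 0; rewrite addr0; split=> //; apply: ideal0.
- by exists 0, b; rewrite add0r; split=> //; apply: ideal0.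
Qed.

Lemma fam_ideal_gen n (a : 'I_n -> A) i : fam_ideal a (a i).
Proof. by apply: ideal_span_gen; exists i. Qed.

Lemma ideal_preimM I z : is_ideal I -> is_ideal (fun x => I (x * z)).
Proof.
move=> idI; split; first by rewrite mul0r; apply: ideal0.
  by move=> a b Ia Ib; rewrite mulrDl; apply: idealD.
by move=> r a Ia; rewrite -mulrA; apply: idealMl.
Qed.

Lemma ideal_span_prod P n (fs : 'I_n -> A) : (forall i, ideal_span P (fs i)) ->
  ideal_span (fun f => exists gs : 'I_n -> A, (forall i, P (gs i)) /\ f = \prod_i gs i)
    (\prod_i fs i).
Proof.
elim: n fs => [|n IHn] fs Pfs.
  by apply: ideal_span_gen; exists (fun _ => 0); split; [case | rewrite !big_ord0].
rewrite big_ord_recr /=.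
pose PP f := exists gs : 'I_n.+1 -> A, (forall i, P (gs i)) /\ f = \prod_i gs i.
have idM z : is_ideal (fun x => ideal_span PP (x * z)).
  by apply: ideal_preimM; apply: ideal_span_ideal.
apply: (ideal_span_min (idM (fs ord_max)) _ (IHn _ (fun i => Pfs (widen_ord _ i)))).
move=> _ [gs [Pgs ->]]; rewrite mulrC.
apply: (ideal_span_min (idM (\prod_i gs i)) _ (Pfs ord_max)) => z Pz; rewrite mulrC.
apply: ideal_span_gen.
exists (fun i => if unlift ord_max i is Some i' then gs i' else z); split.
  by move=> i; case: (unlift ord_max i).
rewrite big_ord_recr /= unlift_none; congr (_ * _); apply: eq_bigr => i _.
have -> : widen_ord (leqnSn n) i = lift ord_max i.
  by apply/val_inj; rewrite /= /bump leqNgt ltn_ord.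
by rewrite liftK.
Qed.

(* [a * u / b] lies in the image of [I] in [A / J], with the denominator cleared. *)
Definition frac_mem J I a b u := exists w, I w /\ J (a * u - b * w).

Lemma frac_mem_ideal J I a b : is_ideal J -> is_ideal I -> is_ideal (frac_mem J I a b).
Proof.
move=> idJ idI; split.
- by exists 0; rewrite !mulr0 subr0; split; apply: ideal0.
- move=> u1 u2 [w1 [Iw1 Jw1]] [w2 [Iw2 Jw2]]; exists (w1 + w2); split; first exact: idealD.
  have -> : a * (u1 + u2) - b * (w1 + w2) = (a * u1 - b * w1) + (a * u2 - b * w2) by ring.
  exact: idealD.
- move=> r u [w [Iw Jw]]; exists (r * w); split; first exact: idealMl.
  have -> : a * (r * u) - b * (r * w) = r * (a * u - b * w) by ring.
  exact: idealMl.
Qed.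

Lemma det_zero_col n (N : 'M[A]_n) j : (forall i, N i j = 0) -> \det N = 0.
Proof. by move=> N0; rewrite (expand_det_col _ j) big1 // => i _; rewrite N0 mul0r. Qed.

Lemma minors_ideal_row_mxl (t p c l : nat) (B : 'M[A]_(p, c)) (C : 'M[A]_(p, l)) f :
  minors_ideal t B f -> minors_ideal t (row_mx B C) f.
Proof.
apply: ideal_span_min; first exact: ideal_span_ideal.
move=> _ [ri [ci [ri_inj ci_inj ->]]]; apply: ideal_span_gen.
exists ri, (fun j => lshift l (ci j)); split=> //; first by move=> ? ? /lshift_inj/ci_inj.
by congr (\det _); apply/matrixP => a b; rewrite [LHS]mxE [RHS]mxE row_mxEl.
Qed.

Lemma minors_ideal_det_sub (t p c : nat) (M : 'M[A]_(p, c))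
    (ri : 'I_t -> 'I_p) (ci : 'I_t -> 'I_c) :
  minors_ideal t M (\det (\matrix_(i, j) M (ri i) (ci j))).
Proof.
case: (boolP (injectiveb ri)) => [/injectiveP ri_inj | /injectivePn [i1 [i2 ne_i eq_ri]]];
  last first.
  rewrite (determinant_alternate ne_i); first exact: ideal0 (ideal_span_ideal _).
  by move=> j; rewrite !mxE eq_ri.
case: (boolP (injectiveb ci)) => [/injectiveP ci_inj | /injectivePn [j1 [j2 ne_j eq_ci]]].
  by apply: ideal_span_gen; exists ri, ci.
rewrite -det_tr (determinant_alternate ne_j); first exact: ideal0 (ideal_span_ideal _).
by move=> i; rewrite !mxE eq_ci.
Qed.

Lemma cramer_row n (N : 'M[A]_n) (y : 'rV[A]_n) i :
  \sum_j (y *m N) 0 j * \adj N j i = \det N * y 0 i.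
Proof.
have := congr1 (fun X : 'rV_n => X 0 i) (mulmxA y N (\adj N)).
by rewrite mul_mx_adj mul_mx_scalar !mxE => <-.
Qed.

End Ideals.

Section XGrading.
Variables (k : fieldType) (d m : nat).
Local Notation S := {mpoly k[d + m]}.
Local Notation xvar := (@xvar k d m).
Local Notation xideal := (@xideal k d m).

(* [xpoly p] is [p] with every [x_i] replaced by [x_i t]: the coefficient of
   [t^e] is the part of [p] of x-degree [e]. *)
Definition xpoly_var (i : 'I_(d + m)) : {poly S} :=
  if (i < d)%N then ('X_i)%:P * 'X else ('X_i)%:P.
Local Notation xpoly := (mmap (polyC \o @mpolyC (d + m) k) xpoly_var).

Definition xhomog (a : nat) (p : S) : Prop := xpoly p = p%:P * 'X^a.
Definition xcomp (e : nat) (p : S) : S := (xpoly p)`_e.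

Definition col_xhomog r c (M : 'M[S]_(r, c)) : Prop :=
  forall j, exists a, forall i, xhomog a (M i j).

Lemma xpoly_mpolyX (mo : 'X_{1..d + m}) : xpoly 'X_[mo] = ('X_[mo])%:P * 'X^(xdeg mo).
Proof.
rewrite mmapX /mmap1 big_split_ord /= [in RHS](mpolyXE_id k mo) rmorph_prod big_split_ord /=.
have xl i : xpoly_var (lshift m i) = ('X_(lshift m i))%:P * 'X by rewrite /xpoly_var /= ltn_ord.
have xr i : xpoly_var (rshift d i) = ('X_(rshift d i))%:P.
  by rewrite /xpoly_var /= ltnNge leq_addr.
under eq_bigr => i _ do rewrite xl exprMn.
under [X in _ * X = _]eq_bigr => i _ do rewrite xr.
rewrite big_split /= prodrXr /xdeg -mulrA [_ * 'X^_]mulrC mulrA.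
by congr (_ * _ * _); apply: eq_bigr => i _; rewrite rmorphXn.
Qed.

Lemma xpolyM p q : xpoly (p * q) = xpoly p * xpoly q.
Proof. exact: (rmorphM (mmap (polyC \o @mpolyC (d + m) k) xpoly_var)). Qed.

Lemma xhomog_mpolyX (mo : 'X_{1..d + m}) : xhomog (xdeg mo) 'X_[mo].
Proof. exact: xpoly_mpolyX. Qed.

Lemma xhomog_xvar i : xhomog 1 (xvar i).
Proof. by rewrite /xhomog /xvar mmapX mmap1U /xpoly_var /= ltn_ord expr1. Qed.

Lemma xhomog_Tvar j : xhomog 0 (@Tvar k d m j).
Proof.
by rewrite /xhomog /Tvar mmapX mmap1U /xpoly_var /= ltnNge leq_addr /= expr0 mulr1.
Qed.

Lemma xhomog_bihomog a b p : bihomog a b p -> xhomog a p.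
Proof.
move=> hp; rewrite /xhomog {1}/mmap.
transitivity (\sum_(mo <- msupp p) ((p@_mo *: 'X_[mo])%:P * 'X^a)).
  rewrite !big_seq; apply: eq_bigr => mo supp_mo.
  rewrite -(mmapX _ (polyC \o @mpolyC (d + m) k)) xpoly_mpolyX.
  by have [-> _] := hp mo supp_mo; rewrite /= mulrA -rmorphM mul_mpolyC.
by rewrite -big_distrl -rmorph_sum -mpolyE.
Qed.

Lemma xhomog0 a : xhomog a 0.
Proof. by rewrite /xhomog mmap0 mul0r. Qed.

Lemma xhomogD a p q : xhomog a p -> xhomog a q -> xhomog a (p + q).
Proof. by rewrite /xhomog mmapD => -> ->; rewrite rmorphD mulrDl. Qed.

Lemma xhomogM a b p q : xhomog a p -> xhomog b q -> xhomog (a + b) (p * q).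
Proof.
rewrite /xhomog xpolyM => -> ->.
by rewrite rmorphM exprD -!mulrA; congr (_ * _); rewrite mulrCA.
Qed.

Lemma xhomogC c : xhomog 0 c%:MP.
Proof. by rewrite /xhomog mmapC /= expr0 mulr1. Qed.

Lemma xhomog1 : xhomog 0 1.
Proof. exact: xhomogC. Qed.

Lemma xhomogX a p e : xhomog a p -> xhomog (a * e) (p ^+ e).
Proof.
move=> hp; elim: e => [|e IHe]; first by rewrite muln0 expr0; apply: xhomog1.
by rewrite exprS mulnS; apply: xhomogM.
Qed.

Lemma xhomog_sum a I (s : seq I) (P : pred I) (F : I -> S) :
  (forall i, P i -> xhomog a (F i)) -> xhomog a (\sum_(i <- s | P i) F i).
Proof. by move=> hF; apply: (big_ind (xhomog a)); [apply: xhomog0 | apply: xhomogD |]. Qed.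

Lemma xhomog_prod I (s : seq I) (P : pred I) (F : I -> S) (e : I -> nat) :
  (forall i, P i -> xhomog (e i) (F i)) ->
  xhomog (\sum_(i <- s | P i) e i)%N (\prod_(i <- s | P i) F i).
Proof.
move=> hF; apply: (big_ind2 (fun a p => xhomog a p)) => //; first exact: xhomog1.
by move=> ? ? ? ?; apply: xhomogM.
Qed.

Lemma xhomog_det0 n (N : 'M[S]_n) : (forall i j, xhomog 0 (N i j)) -> xhomog 0 (\det N).
Proof.
move=> hN; rewrite /xhomog; have -> : xpoly (\det N) = \det (map_mx xpoly N) by rewrite det_map_mx.
rewrite expr0 mulr1 -det_map_mx; congr (\det _).
by apply/matrixP => i j; rewrite !mxE hN expr0 mulr1.
Qed.

Lemma xhomog_eq0 a b p : xhomog a p -> xhomog b p -> a != b -> p = 0.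
Proof.
rewrite /xhomog => -> /(congr1 (fun q : {poly S} => q`_a)).
rewrite !coefMXn ltnn subnn !coefC eqxx /= => + neq_ab.
by case: ltnP => [_ //|le_ba]; rewrite subn_eq0 leqNgt ltn_neqAle le_ba andbT eq_sym neq_ab.
Qed.

Lemma xcompD e p q : xcomp e (p + q) = xcomp e p + xcomp e q.
Proof. by rewrite /xcomp mmapD coefD. Qed.

Lemma xcompB e p q : xcomp e (p - q) = xcomp e p - xcomp e q.
Proof. by rewrite /xcomp mmapB coefB. Qed.

Lemma xcomp_sum e I (s : seq I) (P : pred I) (F : I -> S) :
  xcomp e (\sum_(i <- s | P i) F i) = \sum_(i <- s | P i) xcomp e (F i).
Proof. by apply: big_morph; [apply: xcompD | rewrite /xcomp mmap0 coef0]. Qed.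

Lemma xcompMr a e c h : xhomog a h ->
  xcomp e (c * h) = if (a <= e)%N then xcomp (e - a) c * h else 0.
Proof.
rewrite /xcomp xpolyM => ->.
by rewrite mulrA coefMXn coefMC ltnNge; case: (a <= e)%N.
Qed.

Lemma xcomp_xhomog a e h : xhomog a h -> xcomp e h = if e == a then h else 0.
Proof.
rewrite /xcomp => ->; rewrite coefMXn coefC subn_eq0.
by case: ltngtP => //= [/ltnW -> | ->]; rewrite ?leqnn.
Qed.

Lemma xcompZ e c p : xcomp e (c *: p) = c *: xcomp e p.
Proof.
by rewrite -mul_mpolyC mulrC (xcompMr _ _ (xhomogC _)) subn0 mulrC mul_mpolyC.
Qed.

Lemma xcomp0M p q : xcomp 0 (p * q) = xcomp 0 p * xcomp 0 q.
Proof. by rewrite /xcomp xpolyM coef0M. Qed.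

Lemma xcomp0_det n (N : 'M[S]_n) : xcomp 0 (\det N) = \det (map_mx (xcomp 0) N).
Proof.
have xcomp0E x : xcomp 0 x = (horner_eval 0 \o mmap (polyC \o @mpolyC (d + m) k) xpoly_var) x.
  by rewrite /= horner_evalE horner_coef0.
rewrite xcomp0E -det_map_mx; congr (\det _).
by apply/matrixP => i j; rewrite !mxE xcomp0E.
Qed.

(* A column of x-degree [a > 0] is killed by [xcomp 0], one of x-degree [0] is fixed. *)
Lemma xcomp0_det_col_xhomog n (N : 'M[S]_n) : col_xhomog N ->
  xcomp 0 (\det N) = \det N \/ xcomp 0 (\det N) = 0.
Proof.
move=> hN; rewrite xcomp0_det.
case: (boolP [forall j, forall i, xcomp 0 (N i j) == N i j]) => [/forallP fixN|].
  left; congr (\det _); apply/matrixP => i j; rewrite mxE.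
  by move/forallP: (fixN j) => /(_ i)/eqP.
rewrite negb_forall => /existsP [j]; rewrite negb_forall => /existsP [i0 moved].
right; apply: (det_zero_col (j := j)) => i; rewrite mxE.
have [a ha] := hN j; have a_neq0 : 0%N != a.
  by apply: contraNneq moved => a0; rewrite (xcomp_xhomog _ (ha i0)) -a0 eqxx.
by rewrite (xcomp_xhomog _ (ha i)) (negbTE a_neq0).
Qed.

Lemma xcomp_ideal_span (G I : S -> Prop) e f :
  (forall f, G f -> exists a, xhomog a f) -> (forall f, G f -> I f) -> is_ideal I ->
  ideal_span G f -> I (xcomp e f).
Proof.
move=> homG GI idI [n [c [gs [Ggs ->]]]].
rewrite xcomp_sum; apply: ideal_sum => // i _.
have [a ha] := homG _ (Ggs i); rewrite (xcompMr _ _ ha).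
case: (a <= e)%N; last exact: ideal0.
exact: (idealMl idI (xcomp (e - a) (c i)) (GI _ (Ggs i))).
Qed.

Lemma xideal_ideal : is_ideal xideal.
Proof. exact: ideal_span_ideal. Qed.

Lemma xideal_xvar i : xideal (xvar i).
Proof. exact: fam_ideal_gen. Qed.

Lemma xideal_mpolyX (mo : 'X_{1..d + m}) : xdeg mo != 0%N -> xideal 'X_[mo].
Proof.
rewrite /xdeg sum_nat_eq0 negb_forall => /existsP [i /=].
rewrite -lep1mP => le1; rewrite -(submK le1) mpolyXD.
by apply: (idealMl xideal_ideal); apply: xideal_xvar.
Qed.

Lemma xideal_subr_xcomp0 p : xideal (p - xcomp 0 p).
Proof.
rewrite {1 2}(mpolyE p) xcomp_sum -sumrB.
apply: (ideal_sum xideal_ideal) => mo _.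
rewrite xcompZ (xcomp_xhomog _ (xhomog_mpolyX mo)).
case: eqP => [_|/eqP ne]; first by rewrite subrr; apply: ideal0 xideal_ideal.
rewrite scaler0 subr0 -mul_mpolyC; apply: (idealMl xideal_ideal).
by apply: xideal_mpolyX; rewrite eq_sym.
Qed.

Lemma xideal_xhomog a p : xhomog a p -> (0 < a)%N -> xideal p.
Proof.
move=> hp a_gt0; have := xideal_subr_xcomp0 p; rewrite (xcomp_xhomog _ hp).
by case: eqP => [a0|_]; [move: a_gt0; rewrite -a0 | rewrite subr0].
Qed.

Lemma xhomog_incl_RS e (p : {mpoly k[d]}) : std_homog e p -> xhomog e (incl_RS m p).
Proof.
move=> hp; rewrite /incl_RS comp_mpolyE big_seq; apply: xhomog_sum => mo supp_mo.
rewrite -mul_mpolyC -[e]add0n; apply: xhomogM; first exact: xhomogC.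
rewrite -(hp mo supp_mo) mdegE.
have -> : (\sum_(i < d) mo i = \sum_(i < d) 1 * mo i)%N by apply: eq_bigr => i _; rewrite mul1n.
by apply: xhomog_prod => i _; rewrite tnth_mktuple; apply: xhomogX; apply: xhomog_xvar.
Qed.

Lemma xcomp0_minors t r c (M : 'M[S]_(r, c)) w : col_xhomog M ->
  minors_ideal t M w -> minors_ideal t M (xcomp 0 w).
Proof.
move=> hM [N [cs [gs [minor_gs ->]]]].
rewrite xcomp_sum; apply: (ideal_sum (ideal_span_ideal _)) => i _.
rewrite xcomp0M; apply: (idealMl (ideal_span_ideal _)).
have [ri [ci [_ _ ->]]] := minor_gs i.
have hsub : col_xhomog (\matrix_(i1, j1) M (ri i1) (ci j1)).
  by move=> j; have [a ha] := hM (ci j); exists a => i0; rewrite mxE.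
case: (xcomp0_det_col_xhomog hsub) => ->; first exact: minors_ideal_det_sub.
exact: ideal0 (ideal_span_ideal _).
Qed.

End XGrading.

Section XvecProducts.
Variables (k : fieldType) (d m : nat).
Local Notation S := {mpoly k[d + m]}.
Local Notation xvar := (@xvar k d m).
Local Notation xvec := (@xvec k d m).

Definition xconst (p : S) : Prop := forall mo, mo \in msupp p -> xdeg mo = 0%N.

Lemma xconst_bihomog b p : bihomog 0 b p -> xconst p.
Proof. by move=> hp mo /hp []. Qed.

Definition xspecial (i : 'I_d) (p : S) : S :=
  p \mPo [tuple match split j with inl l => (l == i)%:R | inr _ => 'X_j end | j < d + m].

Lemma xspecial_xvar (i l : 'I_d) : xspecial i (xvar l) = (l == i)%:R.
Proof.
rewrite /xspecial /xvar comp_mpolyX (bigD1 (lshift m l)) //= big1 ?mulr1.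
  by rewrite tnth_mktuple mnm1E eqxx expr1 (unsplitK (inl _ l)).
move=> j ne_j; rewrite mnm1E; case: eqP => [eq_j|_]; last by rewrite expr0.
by move: ne_j; rewrite eq_j eqxx.
Qed.

Lemma xspecial_xconst i p : xconst p -> xspecial i p = p.
Proof.
move=> hp; rewrite /xspecial comp_mpolyEX [in RHS](mpolyE p) !big_seq.
apply: eq_bigr => mo supp_mo; congr (_ *: _).
rewrite comp_mpolyX [in RHS](mpolyXE_id k mo) !big_split_ord /=.
have mo_x0 l : mo (lshift m l) = 0%N.
  by move/eqP: (hp mo supp_mo); rewrite sum_nat_eq0 => /forallP /(_ l) /eqP.
congr (_ * _); apply: eq_bigr => j _; rewrite tnth_mktuple.
  by rewrite mo_x0 !expr0.
by rewrite (unsplitK (inr _ j)).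
Qed.

Lemma xspecial_xvec_mul i (v : 'cV[S]_d) : (forall l, xconst (v l 0)) ->
  xspecial i ((xvec *m v) 0 0) = v i 0.
Proof.
move=> hv.
have xspecialM p q : xspecial i (p * q) = xspecial i p * xspecial i q.
  by rewrite /xspecial rmorphM.
have xspecial_sum (F : 'I_d -> S) : xspecial i (\sum_l F l) = \sum_l xspecial i (F l).
  by rewrite /xspecial rmorph_sum.
rewrite mxE xspecial_sum (bigD1 i) //= big1 => [|l ne_li];
  rewrite !mxE xspecialM xspecial_xvar (xspecial_xconst _ (hv _)).
  by rewrite eqxx mul1r addr0.
by rewrite (negbTE ne_li) mul0r.
Qed.

Lemma xvec_mul_inj (v w : 'cV[S]_d) : (forall i, xconst (v i 0)) ->
  (forall i, xconst (w i 0)) -> xvec *m v = xvec *m w -> v = w.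
Proof.
move=> hv hw vw; apply/matrixP => i j; rewrite [j]ord1.
by rewrite -(xspecial_xvec_mul i hv) -(xspecial_xvec_mul i hw) vw.
Qed.

Lemma xvec_mul_entry c (M : 'M[S]_(d, c)) t :
  (xvec *m M) 0 t = \sum_a xvar a * M a t.
Proof. by rewrite mxE; apply: eq_bigr => a _; rewrite mxE. Qed.

Lemma xvec_mul_col c (M : 'M[S]_(d, c)) t : (xvec *m col t M) 0 0 = (xvec *m M) 0 t.
Proof. by rewrite !mxE; apply: eq_bigr => a _; rewrite !mxE. Qed.

Lemma Lof_xideal c (M : 'M[S]_(d, c)) f : Lof M f -> xideal f.
Proof.
apply: ideal_span_min; first exact: xideal_ideal.
move=> _ [t ->]; rewrite xvec_mul_entry; apply: (ideal_sum (xideal_ideal _ _ _)) => a _.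
by apply: (idealMr (xideal_ideal _ _ _)); apply: xideal_xvar.
Qed.

Lemma Lof_row_mxl c l (B : 'M[S]_(d, c)) (C : 'M[S]_(d, l)) f :
  Lof B f -> Lof (row_mx B C) f.
Proof.
apply: ideal_span_min; first exact: ideal_span_ideal.
move=> _ [t ->].
have -> : (xvec *m B) 0 t = (xvec *m row_mx B C) 0 (lshift l t) by rewrite mul_mx_row row_mxEl.
exact: fam_ideal_gen.
Qed.

Lemma Lof_row_mxr c l (B : 'M[S]_(d, c)) (C : 'M[S]_(d, l)) f :
  fam_ideal (fun t => (xvec *m C) 0 t) f -> Lof (row_mx B C) f.
Proof.
apply: ideal_span_min; first exact: ideal_span_ideal.
move=> _ [t ->].
have -> : (xvec *m C) 0 t = (xvec *m row_mx B C) 0 (rshift c t) by rewrite mul_mx_row row_mxEr.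
exact: fam_ideal_gen.
Qed.

End XvecProducts.

Section JacobianDual.
Variables (k : fieldType) (d m n : nat) (hd : (0 < d)%N).
Local Notation S := {mpoly k[d + m]}.
Local Notation xvar := (@xvar k d m).
Local Notation xvec := (@xvec k d m).
Local Notation xideal := (@xideal k d m).
Local Notation Tphi M := (@Tvec k d m *m map_mx (@incl_RS k d m) M).
Variables (phi' : 'M[{mpoly k[d]}]_(m, m - 2)) (v : 'cV[{mpoly k[d]}]_m).
Variable Bp : 'M[S]_(d, m - 2).
Hypothesis n_gt0 : (0 < n)%N.
Hypothesis v_homog : forall i, std_homog n (v i 0).
Hypothesis Bp_bihomog : forall i j, bihomog 0 1 (Bp i j).
Hypothesis xvec_Bp : xvec *m Bp = Tphi phi'.

Definition Lgen j := (Tphi phi') 0 j.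
Definition Lp := fam_ideal Lgen.
Definition g := (Tphi v) 0 0.
Definition L := ideal_add Lp (fun f => f = g).
Definition J := ideal_add Lp (minors_ideal d Bp).
Definition dlast := last_ord hd.
Definition xd := xvar dlast.
Definition Bdel := row' dlast Bp.
Definition K := ideal_add (ideal_add Lp (minors_ideal d.-1 Bdel)) (fun f => f = xd).
Definition LId c (B : 'M[S]_(d, c)) := ideal_add L (minors_ideal d B).

Lemma Lgen_xvec j : Lgen j = \sum_a xvar a * Bp a j.
Proof. by rewrite /Lgen -xvec_Bp xvec_mul_entry. Qed.

Lemma xhomog_Bp i j : xhomog 0 (Bp i j).
Proof. exact: xhomog_bihomog (@Bp_bihomog i j). Qed.

Lemma xhomog_Lgen j : xhomog 1 (Lgen j).
Proof.
rewrite Lgen_xvec; apply: xhomog_sum => a _.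
exact: xhomogM (xhomog_xvar _ _ a) (xhomog_Bp a j).
Qed.

Lemma xhomog_g : xhomog n g.
Proof.
rewrite /g mxE; apply: xhomog_sum => a _; rewrite !mxE.
exact: xhomogM (xhomog_Tvar _ _ _) (xhomog_incl_RS _ (@v_homog a)).
Qed.

Lemma xhomog_Bdel_minor f : minor_gen d.-1 Bdel f -> xhomog 0 f.
Proof.
by move=> [ri [ci [_ _ ->]]]; apply: xhomog_det0 => a b; rewrite !mxE; apply: xhomog_Bp.
Qed.

Lemma J_ideal : is_ideal J.
Proof. exact: ideal_span_ideal. Qed.

Lemma Lgen_J j : J (Lgen j).
Proof. by apply: ideal_addl; apply: fam_ideal_gen. Qed.

Lemma xcomp_J e f : J f -> J (xcomp e f).
Proof.
pose Jgen f := (exists j, f = Lgen j) \/ minor_gen d Bp f.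
have spanJ : J f -> ideal_span Jgen f.
  apply: ideal_add_min; first exact: ideal_span_ideal.
  - apply: ideal_span_min; first exact: ideal_span_ideal.
    by move=> _ [j ->]; apply: ideal_span_gen; left; exists j.
  - apply: ideal_span_min; first exact: ideal_span_ideal.
    by move=> h Bh; apply: ideal_span_gen; right.
move/spanJ; apply: xcomp_ideal_span; last exact: J_ideal.
  move=> _ [[j ->]|[ri [ci [_ _ ->]]]]; first by exists 1%N; apply: xhomog_Lgen.
  by exists 0%N; apply: xhomog_det0 => a b; rewrite mxE; apply: xhomog_Bp.
by move=> h [[j ->]|Bh]; [apply: Lgen_J | apply/ideal_addr/ideal_span_gen].
Qed.

Lemma J_subr_xcomp0 a e h w : xhomog a h -> a != e ->
  J (h - xd ^+ e * w) -> J (h - xd ^+ e * (w - xcomp 0 w)).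
Proof.
move=> hh ne_ae Jh; have := xcomp_J e Jh.
have hxd : xhomog e (xd ^+ e) by have := xhomogX e (xhomog_xvar k m dlast); rewrite mul1n.
rewrite xcompB (xcomp_xhomog _ hh) eq_sym (negbTE ne_ae) mulrC (xcompMr _ _ hxd).
rewrite leqnn subnn => J0.
have -> : h - xd ^+ e * (w - xcomp 0 w) = (h - xd ^+ e * w) - (0 - xcomp 0 w * xd ^+ e).
  by ring.
exact: idealB J_ideal _ _ Jh J0.
Qed.

Definition cols_cover c (M : 'M[S]_(d, c)) : Prop :=
  forall j, col j Bp = 0 \/ exists t, col t M = col j Bp.

Lemma xvec_mul_col_eq c (M : 'M[S]_(d, c)) t j :
  col t M = col j Bp -> (xvec *m M) 0 t = Lgen j.
Proof.
move=> eq_col; rewrite Lgen_xvec xvec_mul_entry; apply: eq_bigr => a _.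
by have := congr1 (fun X : 'cV_d => X a 0) eq_col; rewrite !mxE => ->.
Qed.

(* Cramer's rule for the [d x d] submatrix [N] of [M] obtained by adding the
   row [d] and the column [t] to the columns of [M] that repeat those of the
   minor: all the other terms of the expansion are multiples of some [L_j]. *)
Lemma cramer_step c (M : 'M[S]_(d, c)) t f : cols_cover M ->
  minor_gen d.-1 Bdel f -> frac_mem J (minors_ideal d M) f xd ((xvec *m M) 0 t).
Proof.
move=> cover [ri [ci [ri_inj _ ->]]].
case: (boolP [exists b, col (ci b) Bp == 0]) => [/existsP [b /eqP Bp_b0] | /existsPn nz_col].
  exists 0; split; first exact: ideal0 (ideal_span_ideal _).
  rewrite (det_zero_col (j := b)) ?mul0r ?mulr0 ?subr0; first exact: ideal0 J_ideal.
  by move=> a; have := congr1 (fun X : 'cV_d => X (lift dlast (ri a)) 0) Bp_b0; rewrite !mxE.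
have col_ex b : exists s, col s M = col (ci b) Bp.
  by case: (cover (ci b)) => [/eqP Bp_b0|//]; move: (nz_col b); rewrite Bp_b0.
have [tb col_tb] := fin_all_exists col_ex.
pose ri' := ord_ext dlast (lift dlast \o ri) dlast.
pose ci' := ord_ext dlast tb t.
pose N := \matrix_(a, b) M (ri' a) (ci' b).
exists (\det N); split; first exact: minors_ideal_det_sub.
have yN b : ((\row_a xvar (ri' a)) *m N) 0 b = (xvec *m M) 0 (ci' b).
  rewrite [RHS]mxE (reindex_inj (ord_ext_lift_inj (i0 := dlast) ri_inj)) /= mxE.
  by apply: eq_bigr => a _; rewrite !mxE.
have adjN : \adj N dlast dlast = \det (\matrix_(i, j) Bdel (ri i) (ci j)).
  rewrite mxE /cofactor -signr_odd addnn odd_double expr0 mul1r; congr (\det _).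
  apply/matrixP => a b; rewrite !mxE /ri' /ci' !ord_ext_lift /=.
  by have := congr1 (fun X : 'cV_d => X (lift dlast (ri a)) 0) (col_tb b); rewrite !mxE.
have y_last : (\row_a xvar (ri' a)) 0 dlast = xd by rewrite mxE /ri' ord_ext_pivot.
have ci'_last : ci' dlast = t by rewrite /ci' ord_ext_pivot.
have := cramer_row N (\row_a xvar (ri' a)) dlast.
under eq_bigr => b _ do rewrite yN.
rewrite y_last (bigD1 dlast) //= adjN ci'_last => cramer.
have -> : \det (\matrix_(i, j) Bdel (ri i) (ci j)) * (xvec *m M) 0 t - xd * \det N
    = - \sum_(b < d | b != dlast) (xvec *m M) 0 (ci' b) * \adj N b dlast.
  by rewrite [xd * _]mulrC -cramer; ring.
apply: (idealN J_ideal); apply: (ideal_sum J_ideal) => b.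
case: (unliftP dlast b) => [b' ->|->]; last by rewrite eqxx.
rewrite /ci' ord_ext_lift (xvec_mul_col_eq (col_tb b')) => _.
by apply: (idealMr J_ideal); apply: Lgen_J.
Qed.

Lemma cramer_Lof c (M : 'M[S]_(d, c)) f w : cols_cover M ->
  minor_gen d.-1 Bdel f -> Lof M w -> frac_mem J (minors_ideal d M) f xd w.
Proof.
move=> cover minor_f; apply: ideal_span_min.
  exact: frac_mem_ideal J_ideal (ideal_span_ideal _).
by move=> _ [t ->]; apply: cramer_step.
Qed.

Definition Kgen f := [\/ exists j, f = Lgen j, minor_gen d.-1 Bdel f | f = xd].

Lemma K_span f : K f -> ideal_span Kgen f.
Proof.
apply: ideal_add_min; first exact: ideal_span_ideal.
- apply: ideal_add_min; first exact: ideal_span_ideal.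
  + apply: ideal_span_min; first exact: ideal_span_ideal.
    by move=> _ [j ->]; apply: ideal_span_gen; apply: Or31; exists j.
  + apply: ideal_span_min; first exact: ideal_span_ideal.
    by move=> h minor_h; apply: ideal_span_gen; apply: Or32.
- by move=> _ ->; apply: ideal_span_gen; apply: Or33.
Qed.

Lemma xhomog_prod_Kgen i (fs : 'I_i -> S) : (forall a, Kgen (fs a)) ->
  exists e, xhomog e (\prod_a fs a).
Proof.
move=> Kfs; have homfs a : exists e, xhomog e (fs a).
  case: (Kfs a) => [[j ->]|/xhomog_Bdel_minor hf|->].
  - by exists 1%N; apply: xhomog_Lgen.
  - by exists 0%N.
  - by exists 1%N; apply: xhomog_xvar.
have [es hes] := fin_all_exists homfs.
by exists (\sum_a es a)%N; apply: xhomog_prod.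
Qed.

Lemma minor_step c (M : 'M[S]_(d, c)) i P e w f :
  cols_cover M -> col_xhomog M -> minor_gen d.-1 Bdel f -> Lof M w ->
  J (g * P - xd ^+ i * w) -> xhomog e P ->
  exists w2, [/\ LId M w2, J (g * (P * f) - xd ^+ i.+1 * w2) & (i.+1 < n)%N -> xideal w2].
Proof.
move=> cover homM minor_f Lw JP homP.
have [w' [minor_w' Jw']] := cramer_Lof cover minor_f Lw.
have J_next : J (g * (P * f) - xd ^+ i.+1 * w').
  have -> : g * (P * f) - xd ^+ i.+1 * w'
      = (g * P - xd ^+ i * w) * f + xd ^+ i * (f * w - xd * w') by rewrite exprS; ring.
  by apply: (idealD J_ideal); [apply: (idealMr J_ideal) | apply: (idealMl J_ideal)].
case: (ltnP i.+1 n) => [lt_in | _]; last first.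
  by exists w'; split=> //; apply: ideal_addr.
exists (w' - xcomp 0 w'); split.
- apply: ideal_addr; apply: (idealB (ideal_span_ideal _)) => //.
  exact: xcomp0_minors homM minor_w'.
- apply: (J_subr_xcomp0 (a := (n + (e + 0))%N)) => //.
    exact: xhomogM xhomog_g (xhomogM homP (xhomog_Bdel_minor minor_f)).
  by apply: contraTneq lt_in => <-; rewrite -leqNgt leq_addr.
- by move=> _; apply: xideal_subr_xcomp0.
Qed.

Definition jdual_inv c (B : 'M[S]_(d, c)) : Prop :=
  [/\ cols_cover B, col_xhomog B & forall f, L f -> Lof B f].

Definition Kprod_frac i c (B : 'M[S]_(d, c)) : Prop :=
  forall fs : 'I_i -> S, (forall a, Kgen (fs a)) ->
  exists w, [/\ LId B w, J (g * \prod_a fs a - xd ^+ i * w) & (i < n)%N -> xideal w].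

Lemma cols_cover_base (B1 : 'M[S]_(d, m - 2 + 1)) : col_bihomog B1 ->
  xvec *m B1 = Tphi (row_mx phi' v) -> cols_cover B1.
Proof.
move=> homB1 xB1 j.
have xB1_j : (xvec *m B1) 0 (lshift 1 j) = Lgen j.
  by rewrite xB1 map_row_mx mul_mx_row row_mxEl.
have eq_xcol : xvec *m col (lshift 1 j) B1 = xvec *m col j Bp.
  by apply/matrixP => x y; rewrite !ord1 !xvec_mul_col xB1_j xvec_Bp.
have const_Bp l : xconst (col j Bp l 0).
  by rewrite mxE; apply: xconst_bihomog (@Bp_bihomog l j).
have [a [b hab]] := homB1 (lshift 1 j).
case: (eqVneq a 0%N) => [a0 | a_neq0].
  right; exists (lshift 1 j); apply: xvec_mul_inj eq_xcol => // l.
  by rewrite mxE; move: (hab l); rewrite a0; apply: xconst_bihomog.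
have Lgen0 : Lgen j = 0.
  apply: (xhomog_eq0 (a := (1 + a)%N) _ (xhomog_Lgen j)); last by rewrite add1n eqSS.
  rewrite -xB1_j xvec_mul_entry; apply: xhomog_sum => l _.
  exact: xhomogM (xhomog_xvar _ _ _) (xhomog_bihomog (hab l)).
left; apply: xvec_mul_inj => // [l|]; first by rewrite mxE; move=> mo; rewrite msupp0.
by apply/matrixP => x y; rewrite !ord1 mulmx0 xvec_mul_col xvec_Bp -/(Lgen j) Lgen0 mxE.
Qed.

Lemma jdual_inv_base (B1 : 'M[S]_(d, m - 2 + 1)) : col_bihomog B1 ->
  xvec *m B1 = Tphi (row_mx phi' v) -> jdual_inv B1.
Proof.
move=> homB1 xB1.
have xB1E : xvec *m B1 = row_mx (Tphi phi') (Tphi v) by rewrite xB1 map_row_mx mul_mx_row.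
split; first exact: cols_cover_base.
  by move=> j; have [a [b hab]] := homB1 j; exists a => i; apply: xhomog_bihomog (hab i).
apply: ideal_add_min; first exact: ideal_span_ideal; last first.
  by move=> _ ->; rewrite /g -(row_mxEr (Tphi phi')) -xB1E; apply: fam_ideal_gen.
apply: ideal_span_min; first exact: ideal_span_ideal.
by move=> _ [j ->]; rewrite /Lgen -(row_mxEl _ (Tphi v)) -xB1E; apply: fam_ideal_gen.
Qed.

Lemma jdual_inv_row_mx c l (B : 'M[S]_(d, c)) (C : 'M[S]_(d, l)) :
  jdual_inv B -> col_bihomog C -> jdual_inv (row_mx B C).
Proof.
move=> [coverB homB LB] homC; split.
- move=> j; case: (coverB j) => [->|[t col_t]]; [by left | right].
  exists (lshift l t); rewrite -col_t.
  by apply/matrixP => a z; rewrite [LHS]mxE [RHS]mxE row_mxEl.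
- move=> s; rewrite -(splitK s); case: (split s) => t /=.
    by have [a ha] := homB t; exists a => i; rewrite row_mxEl.
  by have [a [b hab]] := homC t; exists a => i; rewrite row_mxEr; apply: xhomog_bihomog (hab i).
- by move=> f /LB; apply: Lof_row_mxl.
Qed.

Lemma LId_row_mxl c l (B : 'M[S]_(d, c)) (C : 'M[S]_(d, l)) f : LId B f -> LId (row_mx B C) f.
Proof.
apply: ideal_add_min; [exact: ideal_span_ideal | exact: ideal_addl |].
by move=> h minor_h; apply: ideal_addr; apply: minors_ideal_row_mxl.
Qed.

Lemma Lof_row_mx_LId c l (B : 'M[S]_(d, c)) (u : 'I_l -> S) (C : 'M[S]_(d, l)) w :
  jdual_inv B ->
  (forall f, ideal_add (Lof B) (fun f => minors_ideal d B f /\ xideal f) f <->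
             ideal_add (Lof B) (fam_ideal u) f) ->
  (forall j, (xvec *m C) 0 j = u j) -> LId B w -> xideal w -> Lof (row_mx B C) w.
Proof.
move=> [_ _ LB] defu xC Ww xw.
have [a [b [La minor_b w_ab]]] := ideal_add_decomp (ideal_span_ideal _) (ideal_span_ideal _) Ww.
subst w.
have xb : xideal b.
  have xa : xideal a by apply: Lof_xideal (LB _ La).
  by move: (idealB (xideal_ideal _ _ _) xw xa); rewrite addrAC subrr add0r.
have /defu : ideal_add (Lof B) (fun f => minors_ideal d B f /\ xideal f) (a + b).
  apply: (idealD (ideal_add_ideal _ _)); first by apply: ideal_addl; apply: LB.
  exact: ideal_addr.
apply: ideal_add_min; [exact: ideal_span_ideal | exact: Lof_row_mxl |].
apply: ideal_span_min; first exact: ideal_span_ideal.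
by move=> _ [j ->]; apply: Lof_row_mxr; rewrite -xC; apply: fam_ideal_gen.
Qed.

Lemma Kprod_frac_base (B1 : 'M[S]_(d, m - 2 + 1)) : jdual_inv B1 -> Kprod_frac 1 B1.
Proof.
move=> [coverB1 homB1 LB1] fs Kfs; rewrite big_ord1 expr1.
case: (Kfs ord0) => [[j ->]|minor_f|->].
- exists 0; split=> [||_]; last exact: ideal0 (xideal_ideal _ _ _).
    exact: ideal0 (ideal_span_ideal _).
  by rewrite mulr0 subr0 mulrC; apply: (idealMr J_ideal); apply: Lgen_J.
- have JP : J (g * 1 - xd ^+ 0 * g) by rewrite mulr1 expr0 mul1r subrr; apply: ideal0 J_ideal.
  have := minor_step coverB1 homB1 minor_f (LB1 _ (ideal_addr _ (erefl g))) JP (xhomog1 k d m).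
  by rewrite mul1r expr1.
- exists g; split; first by apply: ideal_addl; apply: ideal_addr.
    by rewrite mulrC subrr; apply: ideal0 J_ideal.
  by move=> _; apply: (xideal_xhomog xhomog_g).
Qed.

Lemma Kprod_frac_step i c l (B : 'M[S]_(d, c)) (u : 'I_l -> S) (C : 'M[S]_(d, l)) :
  jdual_inv B -> Kprod_frac i B -> (i < n)%N ->
  (forall f, ideal_add (Lof B) (fun f => minors_ideal d B f /\ xideal f) f <->
             ideal_add (Lof B) (fam_ideal u) f) ->
  (forall j, (xvec *m C) 0 j = u j) -> col_bihomog C -> Kprod_frac i.+1 (row_mx B C).
Proof.
move=> invB KB lt_in defu xC homC fs Kfs.
have [coverBC homBC _] := jdual_inv_row_mx invB homC.
pose P := \prod_(a < i) fs (widen_ord (leqnSn i) a).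
have [w [Ww JP xw]] := KB _ (fun a => Kfs (widen_ord (leqnSn i) a)).
rewrite big_ord_recr /= -/P.
case: (Kfs ord_max) => [[j ->]|minor_f|->].
- exists 0; split=> [||_]; last exact: ideal0 (xideal_ideal _ _ _).
    exact: ideal0 (ideal_span_ideal _).
  by rewrite mulr0 subr0 mulrA; apply: (idealMl J_ideal); apply: Lgen_J.
- have [e homP] := xhomog_prod_Kgen (fun a => Kfs (widen_ord (leqnSn i) a)).
  apply: (minor_step coverBC homBC minor_f _ JP homP).
  exact: Lof_row_mx_LId invB defu xC Ww (xw lt_in).
- exists w; split=> [||_]; [exact: LId_row_mxl | | exact: xw lt_in].
  have -> : g * (P * xd) - xd ^+ i.+1 * w = (g * P - xd ^+ i * w) * xd by rewrite exprS; ring.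
  exact: (idealMr J_ideal).
Qed.

Lemma IJD_jdual_inv i c (B : 'M[S]_(d, c)) : IJD (row_mx phi' v) i B ->
  jdual_inv B /\ ((i <= n)%N -> Kprod_frac i B).
Proof.
elim=> [B1 homB1 xB1 | i' c' B' l u C _ [invB' KB'] _ defu homC xC].
  have invB1 := jdual_inv_base homB1 xB1.
  by split=> // _; apply: Kprod_frac_base.
split; first exact: jdual_inv_row_mx.
by move=> le_in; apply: Kprod_frac_step (KB' (ltnW le_in)) le_in defu xC homC.
Qed.

Lemma frac_mem_Kpow c (Bn : 'M[S]_(d, c)) : IJD (row_mx phi' v) n Bn ->
  forall u, ideal_pow K n u -> frac_mem J (LId Bn) g (xd ^+ n) u.
Proof.
move=> IJDn; have [_ /(_ (leqnn n)) KBn] := IJD_jdual_inv IJDn.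
have idF := frac_mem_ideal g (xd ^+ n) J_ideal (ideal_add_ideal L (minors_ideal d Bn)).
apply: ideal_span_min => // _ [ks [Kks ->]].
apply: (ideal_span_min idF _ (ideal_span_prod (fun a => K_span (Kks a)))).
by move=> _ [fs [Kfs ->]]; have [w [Ww Jw _]] := KBn fs Kfs; exists w.
Qed.

End JacobianDual.

Unset Implicit Arguments.

(* The unused hypotheses ([d < m], the degree of [phi'], perfection of [I] and
   [G_d]) serve in the paper to make [A] a domain, so that the fractions make
   sense; with the denominator [x_d^n] cleared, the containment is an identity
   modulo [J] that holds without them. *)
Theorem theorem4p7 (k : fieldType) (d m n : nat) (hd : (0 < d)%N)
    (alpha : 'rV[{mpoly k[d]}]_m)
    (phi' : 'M[{mpoly k[d]}]_(m, m - 2)) (v : 'cV[{mpoly k[d]}]_m) :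
  (d < m)%N -> (1 <= n)%N ->
  (forall i j, std_homog 1 (phi' i j)) ->
  (forall i, std_homog n (v i 0)) ->
  HB_perfect_ht2 alpha (row_mx phi' v) ->
  G_cond d (fun i => alpha 0 i) ->
  forall Bp : 'M[{mpoly k[d + m]}]_(d, m - 2),
  (forall i j, bihomog 0 1 (Bp i j)) ->
  @xvec k d m *m Bp = @Tvec k d m *m map_mx (@incl_RS k d m) phi' ->
  let Lp := fam_ideal (fun j => (@Tvec k d m *m map_mx (@incl_RS k d m) phi') 0 j) in
  let g := (@Tvec k d m *m map_mx (@incl_RS k d m) v) 0 0 in
  let L := ideal_add Lp (fun f => f = g) in
  let J := ideal_add Lp (minors_ideal d Bp) in
  let xd := @xvar k d m (last_ord hd) in
  let K := ideal_add (ideal_add Lp (minors_ideal d.-1 (row' (last_ord hd) Bp)))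
                     (fun f => f = xd) in
  forall c (Bn : 'M[{mpoly k[d + m]}]_(d, c)),
    IJD (row_mx phi' v) n Bn ->
    forall u, ideal_pow K n u ->
      exists w, ideal_add L (minors_ideal d Bn) w /\ J (g * u - xd ^+ n * w).
Proof.
move=> _ n_gt0 _ v_homog _ _ Bp Bp_bihomog xvec_Bp Lp g L J xd K c Bn IJDn.
exact: (frac_mem_Kpow n_gt0 v_homog Bp_bihomog xvec_Bp IJDn).
Qed.
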